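(* Let $m$ be a positive integer. For $r\ge 0$ let $f_r=[\psi_1,\psi_1^*]\cdots[\psi_r,\psi_r^*]\in\mathrm{Cl}_q(nm,k)$ (so $f_0=1$), where $[A,B]=AB-BA$. Let $\phi_a$ denote either $\psi_a$ or $\psi_a^*$. There is a map $\Gamma_q\colon \mathrm{Cl}_q(n,k)^{\otimes m}\to \mathrm{Cl}_q(nm,k)$ (ordinary tensor product of algebras over $\mathbb{k}$) determined by \[ 1\otimes\cdots\otimes\phi_a\otimes\cdots\otimes 1\mapsto f_{(j-1)n}\,\phi_{a+(j-1)n},\qquad 1\otimes\cdots\otimes\omega_a\otimes\cdots\otimes1\mapsto \omega_{a+(j-1)n}, \] where on the left $\phi_a$, resp. $\omega_a$, sits in the $j$th tensor factor ($1\le j\le m$, $1\le a\le n$), and it is an isomorphism of $\mathbb{Z}^{nm}$-graded algebras. Its inverse $\Gamma_q^{-1}\colon \mathrm{Cl}_q(nm,k)\to\mathrm{Cl}_q(n,k)^{\otimes m}$ is given by \[ \phi_{a+(j-1)n}\mapsto f_n\otimes\cdots\otimes f_n\otimes\phi_a\otimes1\otimes\cdots\otimes1,\qquad \omega_{a+(j-1)n}\mapsto 1\otimes\cdots\otimes\omega_a\otimes\cdots\otimes 1, \] where $\phi_a$, resp. $\omega_a$, is in the $j$th factor (and $f_n\in\mathrm{Cl}_q(n,k)$ occupies the first $j-1$ factors). In particular, $\Gamma_q(1\otimes\cdots\otimes\phi_a\phi_b\otimes\cdots\otimes1)=\phi_{a+(j-1)n}\phi_{b+(j-1)n}$ when $\phi_a\phi_b$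 is in the $j$th factor.
   Context: Let $\mathbb{k}$ be a field of characteristic different from $2$, let $q\in\mathbb{k}^\times$, and let $N,k$ be positive integers. The quantum Clifford algebra $\mathrm{Cl}_q(N,k)$ is the unital associative $\mathbb{k}$-algebra generated by $\psi_a,\psi_a^*,\omega_a,\omega_a^{-1}$ for $a\in\{1,\dots,N\}$, subject to the relations (for all $a,b\in\{1,\dots,N\}$): $\omega_a\omega_b=\omega_b\omega_a$; $\omega_a\omega_a^{-1}=1$; $\omega_a\psi_b=q^{\delta_{ab}}\psi_b\omega_a$; $\omega_a\psi_b^*=q^{-\delta_{ab}}\psi_b^*\omega_a$; $\psi_a\psi_b+\psi_b\psi_a=0$; $\psi_a^*\psi_b^*+\psi_b^*\psi_a^*=0$; $\psi_a\psi_a^*+q^k\psi_a^*\psi_a=\omega_a^{-k}$; $\psi_a\psi_a^*+q^{-k}\psi_a^*\psi_a=\omega_a^{k}$; and $\psi_a\psi_b^*+\psi_b^*\psi_a=0$ if $a\neq b$. It carries a $\mathbb{Z}^N$-grading with $\deg\psi_a=e_a$, $\deg\psi_a^*=-e_a$, $\deg\omega_a=0$ ($e_a$ the standard basis vector). The theorem uses $N=n$ and $N=nm$; $\mathrm{Cl}_q(n,k)^{\otimes m}$ is $\mathbb{Z}^{nm}$-graded by letting the $j$th factor's degree $e_a$ correspond to $e_{a+(j-1)n}$. *)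

From HB Require Import structures.
From mathcomp Require Import all_boot all_order all_algebra.
From mathcomp Require Import zify.
Set Implicit Arguments. Unset Strict Implicit. Unset Printing Implicit Defensive.
Import Order.TTheory GRing.Theory Num.Theory.
Local Open Scope ring_scope.

(* Indices a in {1..N} of the paper are represented 0-based by 'I_N. *)

Section Clq.
Variables (F : fieldType) (q : F) (N k : nat) (A : algType F).

Definition Clq_rel (psi psis om omi : 'I_N -> A) : Prop :=
  forall a b : 'I_N,
  om a * om b = om b * om a /\
  om a * omi a = 1 /\
  om a * psi b = q ^+ (a == b) *: (psi b * om a) /\
  om a * psis b = q ^- (a == b) *: (psis b * om a) /\
  psi a * psi b + psi b * psi a = 0 /\
  psis a * psis b + psis b * psis a = 0 /\
  psi a * psis a + q ^+ k *: (psis a * psi a) = omi a ^+ k /\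
  psi a * psis a + q ^- k *: (psis a * psi a) = om a ^+ k /\
  (a != b -> psi a * psis b + psis b * psi a = 0).

Definition clq_phi (psi psis : 'I_N -> A) (s : bool) (a : 'I_N) : A :=
  if s then psi a else psis a.

Definition fcomm (psi psis : 'I_N -> A) (r : nat) : A :=
  \prod_(i < N | (i < r)%N) (psi i * psis i - psis i * psi i).

Inductive clq_gen := Psi of 'I_N | Psis of 'I_N | Om of 'I_N | Omi of 'I_N.

Definition clq_ev (psi psis om omi : 'I_N -> A) (g : clq_gen) : A :=
  match g with Psi a => psi a | Psis a => psis a | Om a => om a | Omi a => omi a end.

End Clq.

Definition evec (N : nat) (a : 'I_N) : {ffun 'I_N -> int} := [ffun i => ((i == a) : nat)%:Z].

Definition clq_deg (N : nat) (g : clq_gen N) : {ffun 'I_N -> int} :=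
  match g with
  | Psi a => evec a | Psis a => - evec a | Om _ => 0 | Omi _ => 0 end.

Definition is_Clq (F : fieldType) (q : F) (N k : nat) (A : algType F)
    (psi psis om omi : 'I_N -> A) : Prop :=
  Clq_rel q k psi psis om omi /\
  forall (B : algType F) (psi' psis' om' omi' : 'I_N -> B),
    Clq_rel q k psi' psis' om' omi' ->
    exists f : {lrmorphism A -> B},
      (forall a, [/\ f (psi a) = psi' a, f (psis a) = psis' a,
                     f (om a) = om' a & f (omi a) = omi' a]) /\
      (forall g : {lrmorphism A -> B},
         (forall a, [/\ g (psi a) = psi' a, g (psis a) = psis' a,
                        g (om a) = om' a & g (omi a) = omi' a]) -> g =1 f).

(* T together with iota_1..iota_m is the m-fold tensor power A^{(x) m} of the
   F-algebra A (universal property of the tensor product of algebras: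
   pairwise commuting images). *)
Definition is_tensor_power (F : fieldType) (m : nat) (A T : algType F)
    (iota : 'I_m -> {lrmorphism A -> T}) : Prop :=
  (forall i j : 'I_m, i != j -> forall x y, iota i x * iota j y = iota j y * iota i x) /\
  forall (B : algType F) (g : 'I_m -> {lrmorphism A -> B}),
    (forall i j : 'I_m, i != j -> forall x y, g i x * g j y = g j y * g i x) ->
    exists h : {lrmorphism T -> B},
      (forall i x, h (iota i x) = g i x) /\
      (forall h' : {lrmorphism T -> B}, (forall i x, h' (iota i x) = g i x) -> h' =1 h).

(* Homogeneous elements of degree d: F-linear combinations of words in the
   generators ev whose total degree is d. *)
Definition homog (F : fieldType) (A : algType F) (G : Type) (D : zmodType)
    (ev : G -> A) (deg : G -> D) (d : D) (x : A) : Prop :=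
  exists s : seq (F * seq G),
    x = \sum_(p <- s) p.1 *: \prod_(g <- p.2) ev g /\
    (forall p, List.In p s -> \sum_(g <- p.2) deg g = d).

(* index a + (j-1) n (0-based: j*n + a) in {0..mn-1} *)
Lemma blk_proof (n m : nat) (j : 'I_m) (a : 'I_n) : (j * n + a < m * n)%N.
Proof. have := ltn_ord j; have := ltn_ord a; nia. Qed.

Definition blk (n m : nat) (j : 'I_m) (a : 'I_n) : 'I_(m * n) := Ordinal (blk_proof j a).

Definition clq_shift (n m : nat) (j : 'I_m) (g : clq_gen n) : clq_gen (m * n) :=
  match g with
  | Psi a => Psi (blk j a) | Psis a => Psis (blk j a)
  | Om a => Om (blk j a) | Omi a => Omi (blk j a) end.

(* Z^{nm}-grading of Cl_q(n,k)^{(x) m}: generators iota_j(g), with the j-th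
   factor's e_a corresponding to e_{a+(j-1)n}. *)
Definition tensor_ev (F : fieldType) (n m : nat) (A T : algType F)
    (iota : 'I_m -> {lrmorphism A -> T}) (psi psis om omi : 'I_n -> A)
    (p : 'I_m * clq_gen n) : T := iota p.1 (clq_ev psi psis om omi p.2).

Definition tensor_deg (n m : nat) (p : 'I_m * clq_gen n) : {ffun 'I_(m * n) -> int} :=
  clq_deg (clq_shift p.1 p.2).

Definition Gamma_spec (F : fieldType) (n m : nat) (A T B : algType F)
    (iota : 'I_m -> {lrmorphism A -> T})
    (psiA psisA omA omiA : 'I_n -> A) (psiB psisB omB omiB : 'I_(m * n) -> B)
    (g : T -> B) : Prop :=
  (forall (j : 'I_m) (a : 'I_n) (s : bool),
      g (iota j (clq_phi psiA psisA s a)) = fcomm psiB psisB (j * n) * clq_phi psiB psisB s (blk j a)) /\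
  (forall (j : 'I_m) (a : 'I_n), g (iota j (omA a)) = omB (blk j a)).

From HB Require Import structures.
From mathcomp Require Import all_boot all_order all_algebra.
From mathcomp Require Import zify.
From Stdlib Require Import IndefiniteDescription.
Import Order.TTheory GRing.Theory Num.Theory.
Local Open Scope ring_scope.
Set Implicit Arguments. Unset Strict Implicit.

(* In Cl_q(N,k) the commutators c_a = [psi_a, psis_a] are pairwise commuting
   involutions (psi_a^2 = psis_a^2 = 0 and the two relations for omega_a^{+-k}
   give (psi_a psis_a)^2 + (psis_a psi_a)^2 = 1); c_a commutes with every
   omega and with phi_b for b <> a, and anticommutes with phi_a.  Hence
   f_r = c_1 ... c_r is an involution commuting with phi_b for b >= r and
   anticommuting with phi_b for b < r.
   Twisting the j-th block of generators of Cl_q(nm,k) by f_{(j-1)n} keeps the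
   relations of Cl_q(n,k) inside the block and turns the anticommutation
   between distinct blocks into commutation; this gives m pairwise commuting
   morphisms Cl_q(n,k) -> Cl_q(nm,k), i.e. Gamma_q.  Symmetrically, the elements
   f_n (x) ... (x) f_n (x) phi_a (x) 1 ... of the tensor power satisfy the
   relations of Cl_q(nm,k), giving Gamma_q^{-1}.  Gamma_q sends f_n in the i-th
   factor to c_{(i-1)n+1} ... c_{in}, so both composites fix the generators
   and are identities.  Commutators have degree 0, so generators go to
   homogeneous elements of the same degree both ways. *)

Section RingFacts.
Variable R : pzRingType.
Implicit Types c d w x y z : R.

Definition anticomm x y := x * y = - (y * x).

Lemma anticommP x y : anticomm x y <-> x * y + y * x = 0.
Proof. by split=> [->|/eqP]; rewrite ?addNr // addr_eq0 => /eqP. Qed.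

Lemma anticomm_sym x y : anticomm x y -> anticomm y x.
Proof. by rewrite /anticomm => ->; rewrite opprK. Qed.

Lemma commutator_anticomm_l x y : x * x = 0 -> anticomm x (x * y - y * x).
Proof.
move=> xx; rewrite /anticomm mulrBr mulrBl !mulrA xx mul0r sub0r.
by rewrite -(mulrA y x x) xx mulr0 subr0.
Qed.

Lemma commutator_anticomm_r x y : y * y = 0 -> anticomm y (x * y - y * x).
Proof.
move=> yy; rewrite /anticomm mulrBr mulrBl !mulrA yy mul0r subr0.
by rewrite -(mulrA x y y) yy mulr0 sub0r opprK.
Qed.

Lemma commr_commutator w x y :
  anticomm w x -> anticomm w y -> GRing.comm w (x * y - y * x).
Proof.
have commM a b : anticomm w a -> anticomm w b -> GRing.comm w (a * b).
  by move=> wa wb; rewrite /GRing.comm mulrA wa mulNr -mulrA wb mulrN opprK mulrA.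
by move=> wx wy; apply: commrB; apply: commM.
Qed.

Lemma commr_inv w z x : w * z = 1 -> z * w = 1 -> GRing.comm w x -> GRing.comm z x.
Proof.
move=> wz zw hx; rewrite /GRing.comm.
by rewrite -[z * x]mulr1 -wz mulrA -(mulrA z x w) -hx mulrA zw mul1r.
Qed.

Lemma expr_mul_eq1 x y n : x * y = 1 -> x ^+ n * y ^+ n = 1.
Proof.
move=> xy; elim: n => [|n IH]; first by rewrite !expr0 mulr1.
by rewrite exprSr exprS mulrA -(mulrA _ x y) xy mulr1 IH.
Qed.

Lemma prodr_invol (I : Type) (s : seq I) (P : pred I) (c : I -> R) :
  (forall i j, GRing.comm (c i) (c j)) -> (forall i, c i * c i = 1) ->
  (\prod_(i <- s | P i) c i) * (\prod_(i <- s | P i) c i) = 1.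
Proof.
move=> cC cc1; elim: s => [|i s IH]; first by rewrite big_nil mulr1.
rewrite big_cons; case: ifP => // Pi.
have ci_prod : GRing.comm (c i) (\prod_(j <- s | P j) c j) by apply: commr_prod.
by rewrite mulrA -(mulrA (c i)) -ci_prod mulrA cc1 mul1r IH.
Qed.

Lemma twisted_mul c x y : c * c = 1 -> GRing.comm c x -> (c * x) * (c * y) = x * y.
Proof. by move=> cc1 cx; rewrite mulrA -(mulrA c x c) -cx mulrA cc1 mul1r. Qed.

Lemma twisted_mulC c d x y : anticomm x d -> GRing.comm y c -> GRing.comm c d ->
  (c * x) * (d * y) = - (c * d * (x * y)) /\ (d * y) * (c * x) = c * d * (y * x).
Proof.
move=> xd yc cd; split.
  by rewrite -(mulrA c x) (mulrA x d y) xd mulNr mulrN !mulrA.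
by rewrite -(mulrA d y) (mulrA y c x) yc !mulrA cd.
Qed.

Lemma twisted_comm c d x y : anticomm x d -> GRing.comm y c -> GRing.comm c d ->
  anticomm x y -> GRing.comm (c * x) (d * y).
Proof.
move=> xd yc cd xy; rewrite /GRing.comm; have [-> ->] := twisted_mulC xd yc cd.
by rewrite xy mulrN opprK.
Qed.

Lemma twisted_anticomm c d x y : anticomm x d -> GRing.comm y c -> GRing.comm c d ->
  GRing.comm x y -> anticomm (c * x) (d * y).
Proof.
by move=> xd yc cd xy; rewrite /anticomm; have [-> ->] := twisted_mulC xd yc cd; rewrite xy.
Qed.
End RingFacts.

Section AlgebraFacts.
Variables (F : fieldType) (R : algType F).
Implicit Types w x y : R.

Lemma anticomm_sqr0 x : (2 : F) != 0 -> anticomm x x -> x * x = 0.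
Proof.
move=> h2 /eqP; rewrite -addr_eq0 -mulr2n -scaler_nat scaler_eq0 (negbTE h2) /=.
by move/eqP.
Qed.

Lemma orthogonal_mulD (u v : R) (a b : F) :
  u * v = 0 -> v * u = 0 -> (u + a *: v) * (u + b *: v) = u * u + (a * b) *: (v * v).
Proof.
move=> uv vu; rewrite mulrDl !mulrDr -!scalerAl -!scalerAr uv vu !scaler0 addr0 add0r.
by rewrite scalerA mulrC.
Qed.

Lemma commr_commutator_scale w x y (s t : F) :
  w * x = s *: (x * w) -> w * y = t *: (y * w) -> s * t = 1 ->
  GRing.comm w (x * y - y * x).
Proof.
move=> wx wy st; apply: commrB; rewrite /GRing.comm.
- by rewrite mulrA wx -scalerAl -mulrA wy scalerAr scalerA st scale1r mulrA.
- by rewrite mulrA wy -scalerAl -mulrA wx scalerAr scalerA mulrC st scale1r mulrA.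
Qed.

Lemma mulr_prod_skew (I : Type) (s : seq I) (P : pred I) (c : I -> R) x (e : I -> F) :
  (forall i, P i -> x * c i = e i *: (c i * x)) ->
  x * \prod_(i <- s | P i) c i = (\prod_(i <- s | P i) e i) *: (\prod_(i <- s | P i) c i * x).
Proof.
move=> xc; elim: s => [|i s IH]; first by rewrite !big_nil mulr1 mul1r scale1r.
rewrite !big_cons; case: ifP => // Pi.
by rewrite mulrA xc // -scalerAl -(mulrA (c i) x) IH -scalerAr scalerA mulrA.
Qed.

Lemma anticommr_prod1 (I : finType) (P : pred I) (c : I -> R) x i0 : P i0 ->
  anticomm x (c i0) -> (forall i, P i -> i != i0 -> GRing.comm x (c i)) ->
  anticomm x (\prod_(i | P i) c i).
Proof.
move=> Pi0 xc0 xc; pose e i : F := if i == i0 then -1 else 1.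
have xcE i : P i -> x * c i = e i *: (c i * x).
  by rewrite /e; case: eqP => [->|/eqP ii0 Pi]; rewrite ?scaleN1r ?scale1r //; apply: xc.
rewrite /anticomm (mulr_prod_skew _ xcE) (bigD1 i0) //= {1}/e eqxx big1 ?mulr1 ?scaleN1r //.
by move=> i /andP[_ /negbTE ii0]; rewrite /e ii0.
Qed.
End AlgebraFacts.

Section ClqRelations.
Variables (F : fieldType) (q : F) (k N : nat) (A : algType F).
Variables (psi psis om omi : 'I_N -> A).
Hypothesis rel : Clq_rel q k psi psis om omi.
Hypotheses (two_neq0 : (2 : F) != 0) (q_neq0 : q != 0) (k_gt0 : (0 < k)%N).

Local Notation phi := (clq_phi psi psis).

Lemma omC a b : GRing.comm (om a) (om b). Proof. by case: (rel a b). Qed.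
Lemma om_omi a : om a * omi a = 1. Proof. by case: (rel a a) => _ []. Qed.
Lemma om_psi a b : om a * psi b = q ^+ (a == b) *: (psi b * om a).
Proof. by case: (rel a b) => _ [_ []]. Qed.
Lemma om_psis a b : om a * psis b = q ^- (a == b) *: (psis b * om a).
Proof. by case: (rel a b) => _ [_ [_ []]]. Qed.
Lemma psi_anticomm a b : anticomm (psi a) (psi b).
Proof. by apply/anticommP; case: (rel a b) => _ [_ [_ [_ []]]]. Qed.
Lemma psis_anticomm a b : anticomm (psis a) (psis b).
Proof. by apply/anticommP; case: (rel a b) => _ [_ [_ [_ [_ []]]]]. Qed.
Lemma omi_expk a : psi a * psis a + q ^+ k *: (psis a * psi a) = omi a ^+ k.
Proof. by case: (rel a a) => _ [_ [_ [_ [_ [_ []]]]]]. Qed.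
Lemma om_expk a : psi a * psis a + q ^- k *: (psis a * psi a) = om a ^+ k.
Proof. by case: (rel a a) => _ [_ [_ [_ [_ [_ [_ []]]]]]]. Qed.
Lemma psi_psis_anticomm a b : a != b -> anticomm (psi a) (psis b).
Proof. by move=> ab; apply/anticommP; case: (rel a b) => _ [_ [_ [_ [_ [_ [_ [_ ->]]]]]]]. Qed.

Lemma phi_anticomm s t a b : a != b -> anticomm (phi s a) (phi t b).
Proof.
move=> ab; case: s; case: t => /=.
- exact: psi_anticomm.
- exact: psi_psis_anticomm.
- by apply/anticomm_sym/psi_psis_anticomm; rewrite eq_sym.
- exact: psis_anticomm.
Qed.

Lemma psi_sqr0 a : psi a * psi a = 0.
Proof. exact/anticomm_sqr0/psi_anticomm. Qed.

Lemma psis_sqr0 a : psis a * psis a = 0.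
Proof. exact/anticomm_sqr0/psis_anticomm. Qed.

Lemma om_phi_comm s a b : a != b -> GRing.comm (om a) (phi s b).
Proof.
by case: s => ab; rewrite /GRing.comm /= ?om_psi ?om_psis (negbTE ab) ?invr1 scale1r.
Qed.

Lemma psi_psis_orthogonal a :
  (psi a * psis a) * (psis a * psi a) = 0 /\ (psis a * psi a) * (psi a * psis a) = 0.
Proof.
split; rewrite mulrA.
- by rewrite -(mulrA (psi a)) psis_sqr0 mulr0 mul0r.
- by rewrite -(mulrA (psis a)) psi_sqr0 mulr0 mul0r.
Qed.

Lemma psi_psis_sqrD a :
  (psi a * psis a) * (psi a * psis a) + (psis a * psi a) * (psis a * psi a) = 1.
Proof.
have [uv vu] := psi_psis_orthogonal a.
have := expr_mul_eq1 k (om_omi a).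
by rewrite -om_expk -omi_expk orthogonal_mulD // mulVf ?expf_neq0 // scale1r.
Qed.

(* [omi a] is only required to be a right inverse of [om a]; the relations for
   [om a ^+ k] and [omi a ^+ k] make it a left inverse too. *)
Lemma omi_om a : omi a * om a = 1.
Proof.
have [uv vu] := psi_psis_orthogonal a.
have : omi a ^+ k * om a ^+ k = 1.
  by rewrite -om_expk -omi_expk orthogonal_mulD // mulfV ?expf_neq0 // scale1r psi_psis_sqrD.
case: k k_gt0 => // k' _; rewrite (exprSr (om a)) mulrA => left_inv.
suff -> : omi a = omi a ^+ k'.+1 * om a ^+ k' by [].
by rewrite -[RHS]mulr1 -(om_omi a) mulrA left_inv mul1r.
Qed.

Definition ccomm a := psi a * psis a - psis a * psi a.

Lemma ccomm_sqr a : ccomm a * ccomm a = 1.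
Proof.
have [uv vu] := psi_psis_orthogonal a.
by rewrite /ccomm mulrBl !mulrBr uv vu subr0 sub0r opprK psi_psis_sqrD.
Qed.

Lemma ccomm_anticomm s a : anticomm (phi s a) (ccomm a).
Proof.
by case: s; [apply/commutator_anticomm_l/psi_sqr0 | apply/commutator_anticomm_r/psis_sqr0].
Qed.

Lemma ccomm_comm s a b : a != b -> GRing.comm (phi s b) (ccomm a).
Proof.
move=> ab; rewrite eq_sym in ab; apply: commr_commutator.
- by have := phi_anticomm s true ab.
- by have := phi_anticomm s false ab.
Qed.

Lemma ccomm_om_comm a b : GRing.comm (om b) (ccomm a).
Proof. by apply: (commr_commutator_scale (om_psi b a) (om_psis b a)); rewrite mulfV ?expf_neq0. Qed.

Lemma ccomm_omi_comm a b : GRing.comm (omi b) (ccomm a).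
Proof. by apply: (commr_inv (om_omi b) (omi_om b)); apply: ccomm_om_comm. Qed.

Lemma ccommC a b : GRing.comm (ccomm a) (ccomm b).
Proof.
case: (eqVneq a b) => [->|ab]; first exact: commr_refl.
by apply: commrB; apply: commrM; apply: commr_sym;
  first [apply: (ccomm_comm true) | apply: (ccomm_comm false)].
Qed.

Lemma om_omi_comm a b : GRing.comm (om a) (omi b).
Proof. by apply/commr_sym/(commr_inv (om_omi b) (omi_om b)); apply: omC. Qed.

Lemma omiC a b : GRing.comm (omi a) (omi b).
Proof. by apply: (commr_inv (om_omi a) (omi_om a)); apply: om_omi_comm. Qed.

Lemma omi_phi_comm s a b : a != b -> GRing.comm (omi a) (phi s b).
Proof. by move=> ab; apply: (commr_inv (om_omi a) (omi_om a)); apply: om_phi_comm. Qed.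

Local Notation f := (fcomm psi psis).

Lemma fcomm_sqr r : f r * f r = 1.
Proof. by apply: prodr_invol; [apply: ccommC | apply: ccomm_sqr]. Qed.

Lemma fcommC r r' : GRing.comm (f r) (f r').
Proof. by apply: commr_prod => i _; apply/commr_sym/commr_prod => j _; apply: ccommC. Qed.

Lemma fcomm_om_comm r b : GRing.comm (om b) (f r).
Proof. by apply: commr_prod => i _; apply: ccomm_om_comm. Qed.

Lemma fcomm_omi_comm r b : GRing.comm (omi b) (f r).
Proof. by apply: commr_prod => i _; apply: ccomm_omi_comm. Qed.

Lemma fcomm_phi_comm r s (b : 'I_N) : (r <= b)%N -> GRing.comm (phi s b) (f r).
Proof.
move=> rb; apply: commr_prod => i ir; apply: ccomm_comm.
by apply: contraTneq ir => ->; rewrite -leqNgt.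
Qed.

Lemma fcomm_phi_anticomm r s (b : 'I_N) : (b < r)%N -> anticomm (phi s b) (f r).
Proof.
move=> br.
apply: (anticommr_prod1 (P := fun i : 'I_N => (i < r)%N) br (ccomm_anticomm s b)).
by move=> i _; apply: ccomm_comm.
Qed.
End ClqRelations.

Section RelationTransport.
Variables (F : fieldType) (q : F) (k : nat).

Lemma Clq_rel_morph N (A B : algType F) (h : {lrmorphism A -> B}) (psi psis om omi : 'I_N -> A) :
  Clq_rel q k psi psis om omi ->
  Clq_rel q k (h \o psi) (h \o psis) (h \o om) (h \o omi).
Proof.
move=> rel a b; have [e1 [e2 [e3 [e4 [e5 [e6 [e7 [e8 e9]]]]]]]] := rel a b.
split; first by have := congr1 h e1; rewrite !rmorphM.
split; first by have := congr1 h e2; rewrite rmorphM rmorph1.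
split; first by have := congr1 h e3; rewrite linearZ !rmorphM.
split; first by have := congr1 h e4; rewrite linearZ !rmorphM.
split; first by have := congr1 h e5; rewrite linearD !rmorphM linear0.
split; first by have := congr1 h e6; rewrite linearD !rmorphM linear0.
split; first by have := congr1 h e7; rewrite linearD linearZ !rmorphM rmorphXn.
split; first by have := congr1 h e8; rewrite linearD linearZ !rmorphM rmorphXn.
by move=> ab; have := congr1 h (e9 ab); rewrite linearD !rmorphM linear0.
Qed.

Lemma Clq_rel_inj N (A B : algType F) (h : {lrmorphism A -> B}) (psi psis om omi : 'I_N -> A) :
  injective h -> Clq_rel q k (h \o psi) (h \o psis) (h \o om) (h \o omi) ->
  Clq_rel q k psi psis om omi.
Proof.
move=> h_inj rel a b; have [e1 [e2 [e3 [e4 [e5 [e6 [e7 [e8 e9]]]]]]]] := rel a b.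
split; first by apply: h_inj; rewrite !rmorphM e1.
split; first by apply: h_inj; rewrite !rmorphM e2 rmorph1.
split; first by apply: h_inj; rewrite linearZ !rmorphM e3.
split; first by apply: h_inj; rewrite linearZ !rmorphM e4.
split; first by apply: h_inj; rewrite rmorphD !rmorphM e5 rmorph0.
split; first by apply: h_inj; rewrite rmorphD !rmorphM e6 rmorph0.
split; first by apply: h_inj; rewrite linearD linearZ !rmorphM e7 rmorphXn.
split; first by apply: h_inj; rewrite linearD linearZ !rmorphM e8 rmorphXn.
by move=> ab; apply: h_inj; rewrite rmorphD !rmorphM e9 // rmorph0.
Qed.

Lemma Clq_rel_comp N N' (A : algType F) (psi psis om omi : 'I_N -> A) (sigma : 'I_N' -> 'I_N) :
  injective sigma -> Clq_rel q k psi psis om omi ->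
  Clq_rel q k (psi \o sigma) (psis \o sigma) (om \o sigma) (omi \o sigma).
Proof. by move=> sigma_inj rel a b; rewrite /= -(inj_eq sigma_inj); apply: rel. Qed.

Lemma Clq_rel_twist N (A : algType F) (psi psis om omi : 'I_N -> A) (c : A) :
  Clq_rel q k psi psis om omi -> c * c = 1 ->
  (forall a, GRing.comm c (psi a)) -> (forall a, GRing.comm c (psis a)) ->
  (forall a, GRing.comm c (om a)) ->
  Clq_rel q k (fun a => c * psi a) (fun a => c * psis a) om omi.
Proof.
move=> rel cc1 c_psi c_psis c_om a b.
have [omab [omia [ompsi [ompsis anticomm_rels]]]] := rel a b.
rewrite !twisted_mul //.
split; first exact: omab.
split; first exact: omia.
split; first by rewrite mulrA -c_om -mulrA ompsi -scalerAr mulrA.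
split; first by rewrite mulrA -c_om -mulrA ompsis -scalerAr mulrA.
exact: anticomm_rels.
Qed.
End RelationTransport.

(* Unlike [rmorphM], this keeps [h] under its lrmorphism coercion, so that
   rewrite rules stated for lrmorphisms still match afterwards. *)
Lemma lrmorphM (F : fieldType) (A B : algType F) (h : {lrmorphism A -> B}) x y :
  h (x * y) = h x * h y.
Proof. exact: rmorphM. Qed.

Section Centralizer.
Variables (F : fieldType) (B : algType F) (w : B).

Definition centralizer : {pred B} := fun x => w * x == x * w.

Lemma centralizer_subalg_closed : subalg_closed centralizer.
Proof.
split; first by rewrite unfold_in /= mulr1 mul1r.
- move=> a u v; rewrite !unfold_in /= => /eqP wu /eqP wv.
  by rewrite mulrDr mulrDl -scalerAr wu scalerAl wv.
- move=> u v; rewrite !unfold_in /= => /eqP wu /eqP wv.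
  by rewrite mulrA wu -mulrA wv mulrA.
Qed.

HB.instance Definition _ :=
  GRing.isSubalgClosed.Build F B centralizer centralizer_subalg_closed.

Record cent_alg := CentAlg { cent_val_of :> B; _ : centralizer cent_val_of }.
HB.instance Definition _ := [isSub for cent_val_of].
HB.instance Definition _ := [Choice of cent_alg by <:].
HB.instance Definition _ := [SubChoice_isSubAlgebra of cent_alg by <:].

(* The subtype projection is both an rmorphism and a linear map; packaging it
   as an lrmorphism needs an explicit copy. *)
Definition cent_val (x : cent_alg) : B := val x.
HB.instance Definition _ := GRing.isZmodMorphism.Build cent_alg B cent_val
  (rmorphB (val : {rmorphism cent_alg -> B})).
HB.instance Definition _ := GRing.isMonoidMorphism.Build cent_alg B cent_val
  (rmorph1 (val : {rmorphism cent_alg -> B}), rmorphM (val : {rmorphism cent_alg -> B})).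
Fact cent_valZ : scalable cent_val.
Proof. by move=> c x; rewrite /cent_val linearZ. Qed.
HB.instance Definition _ := GRing.isScalable.Build F cent_alg B *:%R cent_val cent_valZ.

Lemma cent_val_inj : injective cent_val. Proof. exact: val_inj. Qed.

Lemma cent_val_comm x : GRing.comm w (cent_val x). Proof. exact/eqP/(valP x). Qed.
End Centralizer.

Section UniversalProperty.
Variables (F : fieldType) (q : F) (k N : nat) (A : algType F).
Variables (psi psis om omi : 'I_N -> A).
Hypothesis Clq : is_Clq q k psi psis om omi.

Local Notation phi := (clq_phi psi psis).
Local Notation ev := (clq_ev psi psis om omi).

Lemma Clq_morph_eq (B : algType F) (h1 h2 : {lrmorphism A -> B}) :
  (forall s a, h1 (phi s a) = h2 (phi s a)) ->
  (forall a, h1 (om a) = h2 (om a)) -> (forall a, h1 (omi a) = h2 (omi a)) -> h1 =1 h2.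
Proof.
have [f [_ f_uniq]] := Clq.2 B _ _ _ _ (Clq_rel_morph h2 Clq.1).
have f_gen (h : {lrmorphism A -> B}) : (forall s a, h (phi s a) = h2 (phi s a)) ->
    (forall a, h (om a) = h2 (om a)) -> (forall a, h (omi a) = h2 (omi a)) -> h =1 f.
  by move=> h_phi h_om h_omi; apply: f_uniq => a; rewrite /= (h_phi true) (h_phi false).
by move=> h1_phi h1_om h1_omi x; rewrite (f_gen h1) // (f_gen h2).
Qed.

Lemma Clq_lift (B : algType F) (psi' psis' om' omi' : 'I_N -> B) :
  Clq_rel q k psi' psis' om' omi' ->
  {f : {lrmorphism A -> B} | forall g, f (ev g) = clq_ev psi' psis' om' omi' g}.
Proof.
move=> rel; apply: constructive_indefinite_description.
have [f [f_gen _]] := Clq.2 B _ _ _ _ rel.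
by exists f; case=> a /=; case: (f_gen a).
Qed.

Lemma Clq_morph_comm (B : algType F) (h : {lrmorphism A -> B}) (w : B) :
  (forall s a, GRing.comm w (h (phi s a))) ->
  (forall a, GRing.comm w (h (om a))) -> (forall a, GRing.comm w (h (omi a))) ->
  forall x, GRing.comm w (h x).
Proof.
move=> w_phi w_om w_omi.
(* [h] corestricts to the centralizer subalgebra of [w]. *)
have w_gen g : GRing.comm w (h (ev g)).
  by case: g => a; [apply: (w_phi true) | apply: (w_phi false) | apply: w_om | apply: w_omi].
pose lift g : cent_alg w := CentAlg (introT eqP (w_gen g)).
have rel : Clq_rel q k (lift \o @Psi N) (lift \o @Psis N) (lift \o @Om N) (lift \o @Omi N).
  apply: (Clq_rel_inj (h := cent_val (w := w))); first exact: cent_val_inj.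
  exact: (Clq_rel_morph h Clq.1).
have [f f_gen] := Clq_lift rel.
have hf : (cent_val (w := w) \o f : {lrmorphism A -> B}) =1 h.
  apply: Clq_morph_eq => [[] a|a|a] /=;
    by rewrite ?(f_gen (Psi a)) ?(f_gen (Psis a)) ?(f_gen (Om a)) ?(f_gen (Omi a)).
by move=> x; rewrite -hf; apply: cent_val_comm.
Qed.
End UniversalProperty.

Lemma tensor_morph_eq (F : fieldType) (m : nat) (A T : algType F)
    (iota : 'I_m -> {lrmorphism A -> T}) (B : algType F) (h1 h2 : {lrmorphism T -> B}) :
  is_tensor_power iota -> (forall i x, h1 (iota i x) = h2 (iota i x)) -> h1 =1 h2.
Proof.
move=> [iotaC univ] h12.
have h2C i j : i != j -> forall x y,
    (h2 \o iota i) x * (h2 \o iota j) y = (h2 \o iota j) y * (h2 \o iota i) x.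
  by move=> ij x y /=; rewrite -!rmorphM iotaC.
have [h [_ h_uniq]] := univ B (fun i => (h2 \o iota i : {lrmorphism A -> B})) h2C.
by move=> x; rewrite (h_uniq h1 _ x) // (h_uniq h2 _ x).
Qed.

Section Homogeneous.
Variables (F : fieldType) (R : algType F) (G : Type) (D : zmodType).
Variables (ev : G -> R) (deg : G -> D).
Local Notation hg := (homog ev deg).

Lemma homog_word (c : F) (w : seq G) : hg (\sum_(g <- w) deg g) (c *: \prod_(g <- w) ev g).
Proof. by exists [:: (c, w)]; split; [rewrite big_seq1 | move=> p [<-|[]]]. Qed.

Lemma homog0 d : hg d 0.
Proof. by exists [::]; split; [rewrite big_nil | move=> p []]. Qed.

Lemma homogD d x y : hg d x -> hg d y -> hg d (x + y).
Proof.
move=> [s1 [-> s1_deg]] [s2 [-> s2_deg]]; exists (s1 ++ s2); split; first by rewrite big_cat.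
by move=> p /(List.in_app_or s1 s2 p)[]; [apply: s1_deg | apply: s2_deg].
Qed.

Lemma homog_sum d (I : Type) (r : seq I) (x : I -> R) :
  (forall i, List.In i r -> hg d (x i)) -> hg d (\sum_(i <- r) x i).
Proof.
elim: r => [|i r IH] x_deg; first by rewrite big_nil; apply: homog0.
rewrite big_cons; apply: homogD; first by apply: x_deg; left.
by apply: IH => j rj; apply: x_deg; right.
Qed.

Lemma homogZ d (c : F) x : hg d x -> hg d (c *: x).
Proof.
move=> [s [-> s_deg]]; rewrite scaler_sumr; apply: homog_sum => p sp.
by rewrite scalerA -(s_deg p sp); apply: homog_word.
Qed.

Lemma homogB d x y : hg d x -> hg d y -> hg d (x - y).
Proof. by move=> hx hy; apply: homogD => //; rewrite -scaleN1r; apply: homogZ. Qed.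

Lemma homogM d1 d2 x y : hg d1 x -> hg d2 y -> hg (d1 + d2) (x * y).
Proof.
move=> [s1 [-> s1_deg]] [s2 [-> s2_deg]]; rewrite mulr_suml; apply: homog_sum => p s1p.
rewrite mulr_sumr; apply: homog_sum => p' s2p'.
rewrite -scalerAl -scalerAr scalerA -big_cat -(s1_deg p s1p) -(s2_deg p' s2p') -big_cat.
exact: homog_word.
Qed.

Lemma homog1 : hg 0 1.
Proof. by have := homog_word 1 [::]; rewrite !big_nil scale1r. Qed.

Lemma homog_gen g : hg (deg g) (ev g).
Proof. by have := homog_word 1 [:: g]; rewrite !big_seq1 scale1r. Qed.

Lemma homog_commutator d x y : hg d x -> hg (- d) y -> hg 0 (x * y - y * x).
Proof.
by move=> hx hy; apply: homogB; [rewrite -(subrr d) | rewrite -(addNr d)]; apply: homogM.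
Qed.

Lemma homog0_prod (I : Type) (r : seq I) (P : pred I) (x : I -> R) :
  (forall i, P i -> hg 0 (x i)) -> hg 0 (\prod_(i <- r | P i) x i).
Proof.
move=> x_deg; apply: (big_ind (hg 0)) => //; first exact: homog1.
by move=> y z hy hz; rewrite -[0]addr0; apply: homogM.
Qed.
End Homogeneous.

Lemma homog_lrmorph (F : fieldType) (R R' : algType F) (G G' : Type) (D : zmodType)
    (ev : G -> R) (deg : G -> D) (ev' : G' -> R') (deg' : G' -> D) (h : {lrmorphism R -> R'}) :
  (forall g, homog ev' deg' (deg g) (h (ev g))) ->
  forall d x, homog ev deg d x -> homog ev' deg' d (h x).
Proof.
move=> h_gen d x [s [-> s_deg]]; rewrite linear_sum; apply: homog_sum => p sp.
rewrite linearZ rmorph_prod; apply: homogZ; rewrite -(s_deg p sp).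
elim: (p.2) => [|g w IH]; first by rewrite !big_nil; apply: homog1.
by rewrite !big_cons; apply: homogM.
Qed.

Section Blocks.
Variables (n m : nat).
Hypothesis n_gt0 : (0 < n)%N.

Lemma blk_div (j : 'I_m) (a : 'I_n) : (blk j a %/ n)%N = j.
Proof. by rewrite /= divnMDl // divn_small // addn0. Qed.

Lemma blk_mod (j : 'I_m) (a : 'I_n) : (blk j a %% n)%N = a.
Proof. by rewrite /= modnMDl modn_small. Qed.

Lemma blk_eq (i j : 'I_m) (a b : 'I_n) : (blk i a == blk j b) = (i == j) && (a == b).
Proof.
apply/eqP/andP => [e|[/eqP -> /eqP -> //]]; split; apply/eqP/val_inj.
  by rewrite /= -(blk_div i a) -(blk_div j b) e.
by rewrite /= -(blk_mod i a) -(blk_mod j b) e.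
Qed.

Lemma blk_inj (j : 'I_m) : injective (@blk n m j).
Proof. by move=> a b /eqP; rewrite blk_eq eqxx => /eqP. Qed.

Fact ord_div_proof (b : 'I_(m * n)) : (b %/ n < m)%N.
Proof. by rewrite ltn_divLR. Qed.

Definition ord_div (b : 'I_(m * n)) : 'I_m := Ordinal (ord_div_proof b).
Definition ord_mod (b : 'I_(m * n)) : 'I_n := Ordinal (ltn_pmod b n_gt0).

Lemma blk_div_mod b : blk (ord_div b) (ord_mod b) = b.
Proof. by apply: val_inj; rewrite /= -divn_eq. Qed.

Lemma ord_div_blk (j : 'I_m) (a : 'I_n) : ord_div (blk j a) = j.
Proof. exact/val_inj/blk_div. Qed.

Lemma ord_mod_blk (j : 'I_m) (a : 'I_n) : ord_mod (blk j a) = a.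
Proof. exact/val_inj/blk_mod. Qed.

Lemma blk_ge (j : 'I_m) (a : 'I_n) : (j * n <= blk j a)%N.
Proof. exact: leq_addr. Qed.

Lemma blk_lt (j : 'I_m) (a : 'I_n) (j' : nat) : (j < j')%N -> (blk j a < j' * n)%N.
Proof. by move=> jj'; have := ltn_ord a; rewrite /=; nia. Qed.

Lemma big_nat_blocks (R : pzRingType) (x : nat -> R) (j : nat) :
  \prod_(0 <= i < j) \prod_(a < n) x (i * n + a)%N = \prod_(0 <= b < j * n) x b.
Proof.
elim: j => [|j IH]; first by rewrite !big_geq.
rewrite big_nat_recr //= IH mulSn addnC [RHS](big_cat_nat (n := (j * n)%N)) ?leq_addr //.
congr (_ * _); rewrite (big_addn 0 _ (j * n)) addKn big_mkord.
by apply: eq_bigr => a _; rewrite addnC.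
Qed.

(* The redundant filter [a < n] is the one of [fcomm _ _ n]. *)
Lemma prod_blk (R : pzRingType) (x : 'I_(m * n) -> R) (j : nat) : (j <= m)%N ->
  \prod_(i < m | (i < j)%N) \prod_(a < n | (a < n)%N) x (blk i a) =
  \prod_(b < m * n | (b < j * n)%N) x b.
Proof.
move=> jm; pose y b := oapp x 1 (insub b).
have yE (i : 'I_m) (a : 'I_n) : x (blk i a) = y (i * n + a)%N.
  by rewrite /y insubT ?blk_proof //= => lt; congr x; apply: val_inj.
transitivity (\prod_(i < m | (i < j)%N) \prod_(a < n) y (i * n + a)%N).
  by apply: eq_bigr => i _; rewrite big_mkcond; apply: eq_bigr => a _; rewrite ltn_ord yE.
rewrite -(big_ord_widen _ (fun i => \prod_(a < n) y (i * n + a)%N) jm).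
rewrite -(big_mkord xpredT (fun i => \prod_(a < n) y (i * n + a)%N)).
rewrite big_nat_blocks big_mkord (big_ord_widen _ y (leq_mul jm (leqnn n))).
by apply: eq_bigr => b _; rewrite /y valK.
Qed.
End Blocks.

Lemma Clq_rel_blocks (F : fieldType) (q : F) (k n m : nat) (n_gt0 : (0 < n)%N)
    (R : algType F) (psi psis om omi : 'I_m -> 'I_n -> R) :
  (forall j, Clq_rel q k (psi j) (psis j) (om j) (omi j)) ->
  (forall i j a b, i != j -> GRing.comm (om i a) (om j b)) ->
  (forall i j a b s, i != j -> GRing.comm (om i a) (clq_phi (psi j) (psis j) s b)) ->
  (forall i j a b s t, i != j ->
     anticomm (clq_phi (psi i) (psis i) s a) (clq_phi (psi j) (psis j) t b)) ->
  let blocks (x : 'I_m -> 'I_n -> R) b := x (ord_div n_gt0 b) (ord_mod n_gt0 b) in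
  Clq_rel q k (blocks psi) (blocks psis) (blocks om) (blocks omi).
Proof.
move=> rel omC_ij om_phi_ij phi_ij blocks b1 b2.
rewrite /blocks -(blk_div_mod n_gt0 b1) -(blk_div_mod n_gt0 b2).
rewrite !(ord_div_blk n_gt0) !(ord_mod_blk n_gt0) (blk_eq n_gt0).
move: (ord_div n_gt0 b1) (ord_mod n_gt0 b1) (ord_div n_gt0 b2) (ord_mod n_gt0 b2) => i a j b.
have [<-|ij] := eqVneq i j; first exact: rel.
have [_ [om_omi [_ [_ [_ [_ [omi_expk [om_expk _]]]]]]]] := rel i a a.
rewrite /= !expr0 invr1 !scale1r.
split; first exact: omC_ij.
split; first exact: om_omi.
split; first exact: (om_phi_ij _ _ _ _ true ij).
split; first exact: (om_phi_ij _ _ _ _ false ij).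
split; first exact/anticommP/(phi_ij _ _ _ _ true true ij).
split; first exact/anticommP/(phi_ij _ _ _ _ false false ij).
split; first exact: omi_expk.
split; first exact: om_expk.
by move=> _; apply/anticommP/(phi_ij _ _ _ _ true false ij).
Qed.

Section CliffordTensorPower.
Variables (F : fieldType) (q : F) (n m k : nat).
Hypotheses (two_neq0 : (2 : F) != 0) (q_neq0 : q != 0).
Hypotheses (n_gt0 : (0 < n)%N) (k_gt0 : (0 < k)%N).
Variables (A : algType F) (psiA psisA omA omiA : 'I_n -> A).
Hypothesis ClqA : is_Clq q k psiA psisA omA omiA.
Variables (B : algType F) (psiB psisB omB omiB : 'I_(m * n) -> B).
Hypothesis ClqB : is_Clq q k psiB psisB omB omiB.
Variables (T : algType F) (iota : 'I_m -> {lrmorphism A -> T}).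
Hypothesis tensorT : is_tensor_power iota.

Local Notation phiA := (clq_phi psiA psisA).
Local Notation phiB := (clq_phi psiB psisB).
Local Notation fA := (fcomm psiA psisA n).
Local Notation fB j := (fcomm psiB psisB (j * n)).
Let relA := ClqA.1.
Let relB := ClqB.1.

Lemma fB_sqr j : fB j * fB j = 1. Proof. exact: fcomm_sqr relB two_neq0 q_neq0 _. Qed.

Lemma fB_phi_comm (j : 'I_m) s a : GRing.comm (fB j) (phiB s (blk j a)).
Proof. exact/commr_sym/(fcomm_phi_comm relB)/blk_ge. Qed.

Lemma gam_rel (j : 'I_m) :
  Clq_rel q k (fun a => fB j * psiB (blk j a)) (fun a => fB j * psisB (blk j a))
    (omB \o blk j) (omiB \o blk j).
Proof.
apply: (Clq_rel_twist (Clq_rel_comp (blk_inj n_gt0 (j := j)) relB)) => [|a|a|a].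
- exact: fB_sqr.
- exact: (fB_phi_comm j true).
- exact: (fB_phi_comm j false).
- exact/commr_sym/(fcomm_om_comm relB q_neq0).
Qed.

Definition gam (j : 'I_m) : {lrmorphism A -> B} := sval (Clq_lift ClqA (gam_rel j)).

Lemma gam_phi j s a : gam j (phiA s a) = fB j * phiB s (blk j a).
Proof.
have gam_gen := svalP (Clq_lift ClqA (gam_rel j)).
by case: s; [apply: (gam_gen (Psi a)) | apply: (gam_gen (Psis a))].
Qed.

Lemma gam_om j a : gam j (omA a) = omB (blk j a).
Proof. exact: (svalP (Clq_lift ClqA (gam_rel j)) (Om a)). Qed.

Lemma gam_omi j a : gam j (omiA a) = omiB (blk j a).
Proof. exact: (svalP (Clq_lift ClqA (gam_rel j)) (Omi a)). Qed.

Lemma twisted_phiB_comm (i j : 'I_m) s t a b : i != j ->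
  GRing.comm (fB i * phiB s (blk i a)) (fB j * phiB t (blk j b)).
Proof.
move=> ij; wlog lt_ij : i j s t a b {ij} / (i < j)%N.
  move=> wlog_ij; have /orP[lt_ij|lt_ji] : (i < j)%N || (j < i)%N by rewrite -neq_ltn.
  - exact: wlog_ij.
  - exact/commr_sym/wlog_ij.
apply: twisted_comm.
- exact: (fcomm_phi_anticomm relB two_neq0) (blk_lt _ _ lt_ij).
- apply/(fcomm_phi_comm relB)/(leq_trans _ (blk_ge j b)).
  by rewrite leq_mul2r ltnW ?orbT.
- exact: (fcommC relB (i * n) (j * n)).
- by apply: (phi_anticomm relB); rewrite (blk_eq n_gt0) negb_and neq_ltn lt_ij.
Qed.

Lemma omB_twisted_comm (i j : 'I_m) s a b : i != j ->
  GRing.comm (omB (blk j b)) (fB i * phiB s (blk i a)).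
Proof.
move=> ij; apply: commrM; first exact: (fcomm_om_comm relB q_neq0).
by apply: (om_phi_comm relB); rewrite (blk_eq n_gt0) negb_and eq_sym ij.
Qed.

Lemma omiB_twisted_comm (i j : 'I_m) s a b : i != j ->
  GRing.comm (omiB (blk j b)) (fB i * phiB s (blk i a)).
Proof.
move=> ij; apply: commrM; first exact: (fcomm_omi_comm relB two_neq0 q_neq0 k_gt0).
by apply: (omi_phi_comm relB two_neq0 q_neq0 k_gt0); rewrite (blk_eq n_gt0) negb_and eq_sym ij.
Qed.

Lemma gam_comm (i j : 'I_m) : i != j -> forall x y, gam i x * gam j y = gam j y * gam i x.
Proof.
move=> ij x; apply: (Clq_morph_comm ClqA) => [t b|b|b]; apply/commr_sym;
  apply: (Clq_morph_comm ClqA) => [s a|a|a];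
  rewrite ?gam_phi ?gam_om ?gam_omi.
- by apply: twisted_phiB_comm; rewrite eq_sym.
- by apply/commr_sym/omB_twisted_comm; rewrite eq_sym.
- by apply/commr_sym/omiB_twisted_comm; rewrite eq_sym.
- exact: omB_twisted_comm.
- exact: omC relB _ _.
- exact: om_omi_comm relB two_neq0 q_neq0 k_gt0 _ _.
- exact: omiB_twisted_comm.
- exact/commr_sym/(om_omi_comm relB two_neq0 q_neq0 k_gt0).
- exact: omiC relB two_neq0 q_neq0 k_gt0 _ _.
Qed.

Definition fT (j : nat) := \prod_(i < m | (i < j)%N) iota i fA.

Lemma iota_fA_sqr i : iota i fA * iota i fA = 1.
Proof. by rewrite -rmorphM (fcomm_sqr relA two_neq0 q_neq0) rmorph1. Qed.

Lemma iotaC (i j : 'I_m) x y : i != j -> GRing.comm (iota i x) (iota j y).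
Proof. by move=> ij; apply: tensorT.1. Qed.

Lemma iota_comm (j : 'I_m) x y : GRing.comm x y -> GRing.comm (iota j x) (iota j y).
Proof. by rewrite /GRing.comm -!rmorphM => ->. Qed.

Lemma iota_fAC i j : GRing.comm (iota i fA) (iota j fA).
Proof. by have [->|ij] := eqVneq i j; [apply: commr_refl | apply: iotaC]. Qed.

Lemma fT_sqr j : fT j * fT j = 1.
Proof. by apply: prodr_invol; [apply: iota_fAC | apply: iota_fA_sqr]. Qed.

Lemma fTC j j' : GRing.comm (fT j) (fT j').
Proof. by apply: commr_prod => i _; apply/commr_sym/commr_prod => i' _; apply: iota_fAC. Qed.

Lemma fT_comm (j : 'I_m) (j' : nat) x : (j' <= j)%N -> GRing.comm (iota j x) (fT j').
Proof.
move=> le_j'j; apply: commr_prod => i lt_ij'; apply: iotaC.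
by rewrite neq_ltn (leq_trans lt_ij' le_j'j) orbT.
Qed.

Lemma fT_anticomm (j : 'I_m) (j' : nat) s a : (j < j')%N -> anticomm (iota j (phiA s a)) (fT j').
Proof.
move=> lt_jj'; apply: (anticommr_prod1 (P := fun i : 'I_m => (i < j')%N) lt_jj').
  by rewrite /anticomm -!rmorphM (fcomm_phi_anticomm relA two_neq0) ?rmorphN ?rmorphM.
by move=> i _ ij; apply: iotaC; rewrite eq_sym.
Qed.

Lemma fT_om_comm (j : 'I_m) a (j' : nat) : GRing.comm (iota j (omA a)) (fT j').
Proof.
apply: commr_prod => i _; have [<-|ji] := eqVneq j i; last exact: iotaC.
exact/iota_comm/(fcomm_om_comm relA q_neq0).
Qed.

Definition phiT (j : 'I_m) s a := fT j * iota j (phiA s a).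

Lemma phiT_mul j s a t b : phiT j s a * phiT j t b = iota j (phiA s a * phiA t b).
Proof. by rewrite twisted_mul ?rmorphM //; [apply: fT_sqr | apply/commr_sym/fT_comm]. Qed.

Lemma phiT_anticomm (i j : 'I_m) s t a b : i != j -> anticomm (phiT i s a) (phiT j t b).
Proof.
move=> ij; wlog lt_ij : i j s t a b {ij} / (i < j)%N.
  move=> wlog_ij; have /orP[lt_ij|lt_ji] : (i < j)%N || (j < i)%N by rewrite -neq_ltn.
  - exact: wlog_ij.
  - exact/anticomm_sym/wlog_ij.
apply: twisted_anticomm.
- exact: fT_anticomm.
- exact/fT_comm/ltnW.
- exact: fTC.
- by apply: iotaC; rewrite neq_ltn lt_ij.
Qed.

Lemma Ginv_rel :
  Clq_rel q k (fun b => phiT (ord_div n_gt0 b) true (ord_mod n_gt0 b))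
    (fun b => phiT (ord_div n_gt0 b) false (ord_mod n_gt0 b))
    (fun b => iota (ord_div n_gt0 b) (omA (ord_mod n_gt0 b)))
    (fun b => iota (ord_div n_gt0 b) (omiA (ord_mod n_gt0 b))).
Proof.
apply: (Clq_rel_blocks n_gt0 (psi := fun j => phiT j true) (psis := fun j => phiT j false)
  (om := fun j => iota j \o omA) (omi := fun j => iota j \o omiA)).
- move=> j; apply: Clq_rel_twist (Clq_rel_morph (iota j) relA) (fT_sqr j) _ _ _ => a.
  + exact/commr_sym/(fT_comm _ (leqnn j)).
  + exact/commr_sym/(fT_comm _ (leqnn j)).
  + exact/commr_sym/fT_om_comm.
- by move=> i j a b ij; apply: iotaC.
- move=> i j a b s ij.
  by case: s; apply: commrM; first [apply: fT_om_comm | apply: iotaC].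
- by move=> i j a b s t ij; case: s; case: t; apply: phiT_anticomm.
Qed.

Definition Ginv : {lrmorphism B -> T} := sval (Clq_lift ClqB Ginv_rel).

Lemma Ginv_phi j s a : Ginv (phiB s (blk j a)) = phiT j s a.
Proof.
have Ginv_gen := svalP (Clq_lift ClqB Ginv_rel).
case: s; [have := Ginv_gen (Psi (blk j a)) | have := Ginv_gen (Psis (blk j a))];
  by rewrite /= (ord_div_blk n_gt0) (ord_mod_blk n_gt0).
Qed.

Lemma Ginv_om j a : Ginv (omB (blk j a)) = iota j (omA a).
Proof.
have := svalP (Clq_lift ClqB Ginv_rel) (Om (blk j a)).
by rewrite /= (ord_div_blk n_gt0) (ord_mod_blk n_gt0).
Qed.

Lemma Ginv_omi j a : Ginv (omiB (blk j a)) = iota j (omiA a).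
Proof.
have := svalP (Clq_lift ClqB Ginv_rel) (Omi (blk j a)).
by rewrite /= (ord_div_blk n_gt0) (ord_mod_blk n_gt0).
Qed.

Lemma gam_ccomm i a : gam i (ccomm psiA psisA a) = ccomm psiB psisB (blk i a).
Proof.
rewrite /ccomm rmorphB !rmorphM.
have := gam_phi i true a; have := gam_phi i false a; rewrite /= => -> ->.
by rewrite !twisted_mul //;
  first [apply: fB_sqr | apply: (fB_phi_comm i true) | apply: (fB_phi_comm i false)].
Qed.

Lemma Ginv_ccomm i a : Ginv (ccomm psiB psisB (blk i a)) = iota i (ccomm psiA psisA a).
Proof.
rewrite /ccomm rmorphB !rmorphM.
have := Ginv_phi i true a; have := Ginv_phi i false a; rewrite /= => -> ->.
by rewrite !phiT_mul -rmorphB.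
Qed.

Lemma Ginv_fB (j : 'I_m) : Ginv (fB j) = fT j.
Proof.
rewrite rmorph_prod -(prod_blk _ (ltnW (ltn_ord j))).
by apply: eq_bigr => i _; rewrite rmorph_prod; apply: eq_bigr => a _; apply: Ginv_ccomm.
Qed.

Local Notation homB := (homog (clq_ev psiB psisB omB omiB) (@clq_deg (m * n))).
Local Notation homT := (homog (tensor_ev iota psiA psisA omA omiA) (@tensor_deg n m)).

Lemma fB_homog j : homB 0 (fB j).
Proof.
apply: homog0_prod => b _.
exact: homog_commutator (homog_gen _ _ (Psi b)) (homog_gen _ _ (Psis b)).
Qed.

Lemma fT_homog j : homT 0 (fT j).
Proof.
apply: homog0_prod => i _; rewrite rmorph_prod; apply: homog0_prod => a _.
rewrite rmorphB !rmorphM.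
exact: homog_commutator (homog_gen _ _ (i, Psi a)) (homog_gen _ _ (i, Psis a)).
Qed.

Lemma Ginv_homog d y : homB d y -> homT d (Ginv y).
Proof.
apply: homog_lrmorph => -[] b; rewrite -[b](blk_div_mod n_gt0);
  move: (ord_div n_gt0 b) (ord_mod n_gt0 b) => j a /=.
- rewrite (Ginv_phi j true) -[X in homog _ _ X _]add0r; apply: homogM; first exact: fT_homog.
  exact: homog_gen _ _ (j, Psi a).
- rewrite (Ginv_phi j false) -[X in homog _ _ X _]add0r; apply: homogM; first exact: fT_homog.
  exact: homog_gen _ _ (j, Psis a).
- by rewrite Ginv_om; apply: homog_gen _ _ (j, Om a).
- by rewrite Ginv_omi; apply: homog_gen _ _ (j, Omi a).
Qed.

Section Gamma.
Variable Gam : {lrmorphism T -> B}.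
Hypothesis GamE : forall i x, Gam (iota i x) = gam i x.

Lemma Gam_fT (j : 'I_m) : Gam (fT j) = fB j.
Proof.
rewrite /fcomm rmorph_prod -(prod_blk _ (ltnW (ltn_ord j))).
apply: eq_bigr => i _; apply: etrans (GamE i fA) _.
by rewrite rmorph_prod; apply: eq_bigr => a _; apply: gam_ccomm.
Qed.

Lemma Gam_spec : Gamma_spec iota psiA psisA omA omiA psiB psisB omB omiB Gam.
Proof. by split=> j a *; rewrite GamE ?gam_phi ?gam_om. Qed.

Lemma Gamma_spec_uniq (g : {lrmorphism T -> B}) :
  Gamma_spec iota psiA psisA omA omiA psiB psisB omB omiB g -> g =1 Gam.
Proof.
move=> [g_phi g_om]; apply: (tensor_morph_eq tensorT) => i.
apply: (Clq_morph_eq ClqA (h1 := g \o iota i) (h2 := Gam \o iota i)) => [s a|a|a] /=;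
  rewrite GamE ?gam_phi ?gam_om ?gam_omi //.
(* [Gamma_spec] says nothing about [omi]: it is determined as the inverse of [om]. *)
rewrite -[LHS]mulr1 -(om_omi relB (blk i a)) mulrA -g_om -!rmorphM.
by rewrite (omi_om relA two_neq0 q_neq0 k_gt0) !rmorph1 mul1r.
Qed.

Lemma GamK : cancel Gam Ginv.
Proof.
apply: (tensor_morph_eq tensorT (h1 := Ginv \o Gam) (h2 := idfun)) => i.
apply: (Clq_morph_eq ClqA (h1 := Ginv \o Gam \o iota i) (h2 := iota i)) => [s a|a|a] /=;
  rewrite GamE ?gam_om ?gam_omi ?Ginv_om ?Ginv_omi //.
by rewrite gam_phi lrmorphM Ginv_fB Ginv_phi /phiT mulrA fT_sqr mul1r.
Qed.

Lemma GinvK : cancel Ginv Gam.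
Proof.
apply: (Clq_morph_eq ClqB (h1 := Gam \o Ginv) (h2 := idfun)) => [s b|b|b] /=;
  rewrite -[b](blk_div_mod n_gt0); move: (ord_div n_gt0 b) (ord_mod n_gt0 b) => j a.
- by rewrite Ginv_phi /phiT lrmorphM Gam_fT GamE gam_phi mulrA fB_sqr mul1r.
- by rewrite Ginv_om GamE gam_om.
- by rewrite Ginv_omi GamE gam_omi.
Qed.

Lemma Gam_homog d x : homT d x -> homB d (Gam x).
Proof.
apply: homog_lrmorph => -[j [] a]; rewrite /tensor_ev /tensor_deg /= GamE.
- rewrite (gam_phi j true) -[X in homog _ _ X _]add0r; apply: homogM; first exact: fB_homog.
  exact: homog_gen _ _ (Psi (blk j a)).
- rewrite (gam_phi j false) -[X in homog _ _ X _]add0r; apply: homogM; first exact: fB_homog.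
  exact: homog_gen _ _ (Psis (blk j a)).
- by rewrite gam_om; apply: homog_gen _ _ (Om (blk j a)).
- by rewrite gam_omi; apply: homog_gen _ _ (Omi (blk j a)).
Qed.

Lemma Gam_homogE d x : homT d x <-> homB d (Gam x).
Proof. by split=> [|/Ginv_homog]; [apply: Gam_homog | rewrite GamK]. Qed.

Lemma Gam_phi_mul j a b s t :
  Gam (iota j (phiA s a * phiA t b)) = phiB s (blk j a) * phiB t (blk j b).
Proof. by rewrite GamE lrmorphM !gam_phi twisted_mul //; [apply: fB_sqr | apply: fB_phi_comm]. Qed.
End Gamma.
End CliffordTensorPower.

Unset Implicit Arguments.

Theorem theorem3p10 (F : fieldType) (q : F) (n m k : nat)
  (hF : 2 \notin [pchar F]) (hq : q != 0)
  (hn : (0 < n)%N) (hm : (0 < m)%N) (hk : (0 < k)%N)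
  (A : algType F) (psiA psisA omA omiA : 'I_n -> A)
  (hA : is_Clq q k psiA psisA omA omiA)
  (B : algType F) (psiB psisB omB omiB : 'I_(m * n) -> B)
  (hB : is_Clq q k psiB psisB omB omiB)
  (T : algType F) (iota : 'I_m -> {lrmorphism A -> T})
  (hT : is_tensor_power iota) :
  exists (Gam : {lrmorphism T -> B}) (Ginv : {lrmorphism B -> T}),
    Gamma_spec iota psiA psisA omA omiA psiB psisB omB omiB Gam /\
        (forall g : {lrmorphism T -> B},
           Gamma_spec iota psiA psisA omA omiA psiB psisB omB omiB g -> g =1 Gam) /\
        cancel Gam Ginv /\ cancel Ginv Gam /\
        (forall (d : {ffun 'I_(m * n) -> int}) (x : T),
           homog (tensor_ev iota psiA psisA omA omiA) (@tensor_deg n m) d x <->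
           homog (clq_ev psiB psisB omB omiB) (@clq_deg (m * n)) d (Gam x)) /\
        (forall (j : 'I_m) (a : 'I_n) (s : bool),
           Ginv (clq_phi psiB psisB s (blk j a)) =
           (\prod_(i < m | (i < j)%N) iota i (fcomm psiA psisA n)) * iota j (clq_phi psiA psisA s a)) /\
        (forall (j : 'I_m) (a : 'I_n), Ginv (omB (blk j a)) = iota j (omA a)) /\
        (forall (j : 'I_m) (a b : 'I_n) (s t : bool),
           Gam (iota j (clq_phi psiA psisA s a * clq_phi psiA psisA t b)) =
           clq_phi psiB psisB s (blk j a) * clq_phi psiB psisB t (blk j b)).
Proof.
have two_neq0 : (2 : F) != 0 by apply: contraNneq hF => two0; rewrite inE /= two0.
have [Gam [GamE _]] := hT.2 B _ (gam_comm two_neq0 hq hn hk hA hB).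
exists Gam, (Ginv two_neq0 hq hn hA hB hT).
split; first exact: (Gam_spec GamE).
split; first exact: (Gamma_spec_uniq hk hT GamE).
split; first exact: (GamK hT GamE).
split; first exact: (GinvK hT GamE).
split; first exact: (Gam_homogE hT GamE).
split; first by move=> j a s; apply: Ginv_phi.
split; first exact: Ginv_om.
exact: (Gam_phi_mul GamE).
Qed.
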